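(* Let $L\ge2$, $C\ge1$, fix an input $x$ and a label $y\in\{1,\dots,C\}$, and let $A(\bm\theta),B(\bm\theta)\in\mathbb R^C$ be the functions of the ReLU network parameters $\bm\theta=(W_1,b_1,\dots,W_L,b_L)$ defined in the context, so that $F_x(\bm\theta)=A(\bm\theta)-B(\bm\theta)$ is the network output. Define the cross-entropy loss $\mathcal L^{\mathrm{CE}}_{x,y}(\bm\theta)=\operatorname{LSE}(F_x(\bm\theta))-A_y(\bm\theta)+B_y(\bm\theta)$, where $\operatorname{LSE}(t)=\log\sum_{c=1}^Ce^{t_c}=\max_{p\in\Delta_C}\{\langle p,t\rangle-\sum_cp_c\log p_c\}$ and $\Delta_C=\{p\ge0:\mathbf 1^\top p=1\}$. Let $g(\bm\theta)=\operatorname{LSE}(F_x(\bm\theta))+\mathbf 1^\top B(\bm\theta)+B_y(\bm\theta)$ and $h(\bm\theta)=A_y(\bm\theta)+\mathbf 1^\top B(\bm\theta)$. Then $\mathcal L^{\mathrm{CE}}_{x,y}=g-h$, and for every block $\theta_l=(W_l,b_l)$, with all other blocks fixed, $g$ and $h$ are convex in $\theta_l$; i.e. this is a BDC decomposition of $\mathcal L^{\mathrm{CE}}_{x,y}$.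
   Context: Network: $W_l\in\mathbb R^{d_l\times d_{l-1}}$, $b_l\in\mathbb R^{d_l}$ for $l<L$, $W_L\in\mathbb R^{C\times d_{L-1}}$, $b_L\in\mathbb R^C$; $\sigma(t)=\max\{t,0\}$ entrywise; vector max coordinatewise. Set $Z_1^+=\sigma(W_1x+b_1)$, $Z_1^-=0$ and for $l=1,\dots,L-2$: $p_{l+1}=\sigma(W_{l+1})Z_l^++\sigma(-W_{l+1})Z_l^-+b_{l+1}$, $Z_{l+1}^-=\sigma(W_{l+1})Z_l^-+\sigma(-W_{l+1})Z_l^+$, $Z_{l+1}^+=\max\{p_{l+1},Z_{l+1}^-\}$. Then $A(\bm\theta)=\sigma(W_L)Z_{L-1}^++\sigma(-W_L)Z_{L-1}^-+\sigma(b_L)$ and $B(\bm\theta)=\sigma(W_L)Z_{L-1}^-+\sigma(-W_L)Z_{L-1}^++\sigma(-b_L)$; $A_y,B_y$ denote their $y$-th coordinates. *)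

From HB Require Import structures.
From mathcomp Require Import all_boot all_order all_algebra.
From mathcomp Require Import reals.
From mathcomp Require Import sequences exp.
Set Implicit Arguments. Unset Strict Implicit. Unset Printing Implicit Defensive.
Import Order.TTheory GRing.Theory Num.Theory.
Local Open Scope ring_scope.

Section Net.
Variable R : realType.
(* widths: d l = d_l; layer l (1 <= l <= L) has W l : d_l x d_{l-1}, b l : d_l.
   The number of layers is L = n.+2 (so L >= 2) and C = d L. *)
Variable d : nat -> nat.

Definition Params := forall l : nat, 'M[R]_(d l, d l.-1).
Definition Biases := forall l : nat, 'cV[R]_(d l).

Definition relu {m k : nat} (M : 'M[R]_(m, k)) : 'M[R]_(m, k) :=
  map_mx (fun t => Num.max t 0) M.
Definition vmax {m k : nat} (M N : 'M[R]_(m, k)) : 'M[R]_(m, k) :=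
  \matrix_(i, j) Num.max (M i j) (N i j).

Variables (x : 'cV[R]_(d 0%N)) (W : Params) (b : Biases).

(* Zpm k = (Z_{k+1}^+, Z_{k+1}^-) *)
Fixpoint Zpm (k : nat) : 'cV[R]_(d k.+1) * 'cV[R]_(d k.+1) :=
  match k return 'cV[R]_(d k.+1) * 'cV[R]_(d k.+1) with
  | 0 => (relu (W 1%N *m x + b 1%N), 0)
  | k'.+1 =>
      let Zp := (Zpm k').1 in let Zm := (Zpm k').2 in
      let p := relu (W k'.+2) *m Zp + relu (- W k'.+2) *m Zm + b k'.+2 in
      let Zm' := relu (W k'.+2) *m Zm + relu (- W k'.+2) *m Zp in
      (vmax p Zm', Zm')
  end.

Variable n : nat.

Definition netA : 'cV[R]_(d n.+2) :=
  relu (W n.+2) *m (Zpm n).1 + relu (- W n.+2) *m (Zpm n).2 + relu (b n.+2).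
Definition netB : 'cV[R]_(d n.+2) :=
  relu (W n.+2) *m (Zpm n).2 + relu (- W n.+2) *m (Zpm n).1 + relu (- b n.+2).
Definition netF : 'cV[R]_(d n.+2) := netA - netB.

End Net.

Definition LSE {R : realType} {C : nat} (t : 'cV[R]_C) : R :=
  ln (\sum_(c < C) expR (t c 0)).

Section Losses.
Variables (R : realType) (d : nat -> nat) (n : nat) (x : 'cV[R]_(d 0%N)) (y : 'I_(d n.+2)).

Definition LCE (W : Params R d) (b : Biases R d) : R :=
  LSE (netF x W b n) - netA x W b n y 0 + netB x W b n y 0.

Definition gDC (W : Params R d) (b : Biases R d) : R :=
  LSE (netF x W b n) + (\sum_(c < d n.+2) netB x W b n c 0) + netB x W b n y 0.

Definition hDC (W : Params R d) (b : Biases R d) : R :=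
  netA x W b n y 0 + \sum_(c < d n.+2) netB x W b n c 0.
End Losses.

Definition block_convex {R : realType} {d : nat -> nat} (L l : nat)
  (f : Params R d -> Biases R d -> R) : Prop :=
  forall (W1 W2 : Params R d) (b1 b2 : Biases R d) (t : R),
    (forall k, (1 <= k <= L)%N -> k != l -> W1 k = W2 k /\ b1 k = b2 k) ->
    0 <= t <= 1 ->
    f (fun k => t *: W1 k + (1 - t) *: W2 k) (fun k => t *: b1 k + (1 - t) *: b2 k)
    <= t * f W1 b1 + (1 - t) * f W2 b2.

(** Every quantity computed by the network is, entrywise, a convex function
    of a single block [theta_l] when the other blocks are fixed.  Below layer
    [l] nothing moves; at layer [l] the nonnegative activations [Z^+, Z^-] are
    multiplied by the convex matrices [sigma(W_l)], [sigma(-W_l)] and shifted by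
    the affine [b_l]; above layer [l] the fixed nonnegative matrices
    [sigma(+-W_k)] are monotone, so sums, coordinatewise maxima and [sigma] keep
    convexity.  Hence [A] and [B] are entrywise block convex, which gives the
    convexity of [h = A_y + 1^T B].  For [g] note that
    [F_c + 1^T B = A_c + sum_(c' <> c) B_c'] is block convex, and [LSE] is
    convex and monotone, so [g = LSE(F + 1^T B) + B_y] is block convex. *)
From HB Require Import structures.
From mathcomp Require Import all_boot all_order all_algebra.
From mathcomp Require Import interval_inference reals.
From mathcomp Require Import sequences exp.
From mathcomp Require Import ring lra.
Set Implicit Arguments. Unset Strict Implicit.
Import Order.TTheory GRing.Theory Num.Theory.
Local Open Scope ring_scope.

Definition le_mix {R : realType} {m k : nat} (t : R) (A A1 A2 : 'M[R]_(m, k)) :=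
  forall i j, A i j <= t * A1 i j + (1 - t) * A2 i j.

Section Mixtures.
Variables (R : realType) (t : R).
Hypothesis t01 : 0 <= t <= 1.

Lemma max_le_mix (a b a1 b1 a2 b2 : R) :
  a <= t * a1 + (1 - t) * a2 -> b <= t * b1 + (1 - t) * b2 ->
  Num.max a b <= t * Num.max a1 b1 + (1 - t) * Num.max a2 b2.
Proof.
move: t01 => /andP[t0 t1] ha hb.
have [ha1 hb1] : a1 <= Num.max a1 b1 /\ b1 <= Num.max a1 b1 by rewrite !le_max !lexx orbT.
have [ha2 hb2] : a2 <= Num.max a2 b2 /\ b2 <= Num.max a2 b2 by rewrite !le_max !lexx orbT.
rewrite ge_max; apply/andP; split; nra.
Qed.

Lemma expR_le_mix (a1 a2 : R) :
  expR (t * a1 + (1 - t) * a2) <= t * expR a1 + (1 - t) * expR a2.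
Proof. by case/andP: t01 => t0 t1; exact: (convex_expR (Itv01 t0 t1)). Qed.

Variables (m k : nat).
Implicit Types A B : 'M[R]_(m, k).

Lemma le_mix_conv A1 A2 : le_mix t (t *: A1 + (1 - t) *: A2) A1 A2.
Proof. by move=> i j; rewrite !mxE. Qed.

Lemma le_mix_add A A1 A2 B B1 B2 :
  le_mix t A A1 A2 -> le_mix t B B1 B2 -> le_mix t (A + B) (A1 + B1) (A2 + B2).
Proof. by move=> hA hB i j; rewrite !mxE; have := hA i j; have := hB i j; lra. Qed.

Lemma le_mix_vmax A A1 A2 B B1 B2 :
  le_mix t A A1 A2 -> le_mix t B B1 B2 ->
  le_mix t (vmax A B) (vmax A1 B1) (vmax A2 B2).
Proof. by move=> hA hB i j; rewrite !mxE; apply: max_le_mix. Qed.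

Lemma le_mix_relu A A1 A2 :
  le_mix t A A1 A2 -> le_mix t (relu A) (relu A1) (relu A2).
Proof. by move=> hA i j; rewrite !mxE; apply: max_le_mix; [apply: hA | lra]. Qed.

Lemma le_mix_relu_conv A1 A2 :
  le_mix t (relu (t *: A1 + (1 - t) *: A2)) (relu A1) (relu A2) /\
  le_mix t (relu (- (t *: A1 + (1 - t) *: A2))) (relu (- A1)) (relu (- A2)).
Proof.
split; apply: le_mix_relu; first exact: le_mix_conv.
by rewrite opprD -!scalerN; apply: le_mix_conv.
Qed.

Lemma sum_le_mix (u u1 u2 : 'cV[R]_m) (P : pred 'I_m) :
  le_mix t u u1 u2 ->
  \sum_(c | P c) u c 0 <= t * \sum_(c | P c) u1 c 0 + (1 - t) * \sum_(c | P c) u2 c 0.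
Proof. by move=> hu; rewrite !mulr_sumr -big_split; apply: ler_sum => c _; apply: hu. Qed.

End Mixtures.

Lemma le_mix_mulmx (R : realType) (t : R) p q r (M M1 M2 : 'M[R]_(p, q))
    (Z Z1 Z2 : 'M[R]_(q, r)) :
  (forall i j, 0 <= M i j) -> (forall i j, 0 <= Z i j) ->
  (M1 = M /\ M2 = M) \/ (Z1 = Z /\ Z2 = Z) ->
  le_mix t M M1 M2 -> le_mix t Z Z1 Z2 -> le_mix t (M *m Z) (M1 *m Z1) (M2 *m Z2).
Proof.
move=> M0 Z0 fixed hM hZ i j.
rewrite !mxE !mulr_sumr -big_split; apply: ler_sum => h _ /=.
case: fixed => [[-> ->] | [-> ->]].
- by rewrite mulrCA (mulrCA (1 - t)) -mulrDr; apply: ler_wpM2l.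
- by rewrite !mulrA -mulrDl; apply: ler_wpM2r.
Qed.

Section LogSumExp.
Variables (R : realType) (C : nat).
Hypothesis C_gt0 : (0 < C)%N.
Implicit Types u v : 'cV[R]_C.

Lemma sum_expR_gt0 u : 0 < \sum_(c < C) expR (u c 0).
Proof.
pose c0 : 'I_C := Ordinal C_gt0.
apply: (lt_le_trans (expR_gt0 (u c0 0))).
by rewrite (bigD1 c0) //= lerDl sumr_ge0 // => c _; rewrite expR_ge0.
Qed.

Lemma ler_LSE u v : (forall c, u c 0 <= v c 0) -> LSE u <= LSE v.
Proof.
move=> huv; rewrite /LSE ler_ln ?posrE ?sum_expR_gt0 //.
by apply: ler_sum => c _; rewrite ler_expR.
Qed.

Lemma LSE_addc u s : LSE (u + const_mx s) = LSE u + s.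
Proof.
rewrite /LSE -[in RHS](expRK s) -lnM ?posrE ?sum_expR_gt0 ?expR_gt0 //.
by rewrite mulr_suml; congr ln; apply: eq_bigr => c _; rewrite !mxE expRD.
Qed.

Lemma LSE_conv (t : R) u v : 0 <= t <= 1 ->
  LSE (t *: u + (1 - t) *: v) <= t * LSE u + (1 - t) * LSE v.
Proof.
move=> t01; rewrite /LSE.
set Su := \sum_(c < C) expR (u c 0); set Sv := \sum_(c < C) expR (v c 0).
have [Su0 Sv0] : 0 < Su /\ 0 < Sv by rewrite !sum_expR_gt0.
set s := t * ln Su + (1 - t) * ln Sv.
rewrite -[s]expRK ler_ln ?posrE ?sum_expR_gt0 ?expR_gt0 //.
(* After normalizing by [Su] and [Sv], each summand is bounded by [expR s]
   times a mixture of two probability vectors. *)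
have term_le c : expR ((t *: u + (1 - t) *: v) c 0) <=
    expR s * (t * (expR (u c 0) / Su) + (1 - t) * (expR (v c 0) / Sv)).
  have -> : (t *: u + (1 - t) *: v) c 0 =
      s + (t * (u c 0 - ln Su) + (1 - t) * (v c 0 - ln Sv)).
    by rewrite !mxE /s; ring.
  rewrite expRD ler_pM2l ?expR_gt0 //.
  by apply: le_trans (expR_le_mix t01 _ _) _; rewrite !expRB !lnK ?posrE.
apply: (le_trans (ler_sum _ (fun c _ => term_le c))).
rewrite -mulr_sumr big_split /= -!mulr_sumr -!mulr_suml -/Su -/Sv.
by rewrite !divff ?gt_eqF // !mulr1 addrC subrK mulr1.
Qed.

Lemma le_mix_LSE (t : R) u u1 u2 : 0 <= t <= 1 ->
  le_mix t u u1 u2 -> LSE u <= t * LSE u1 + (1 - t) * LSE u2.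
Proof.
move=> t01 hu; apply: (le_trans _ (LSE_conv u1 u2 t01)).
by apply: ler_LSE => c; rewrite !mxE; apply: hu.
Qed.

End LogSumExp.

Section Activations.
Variables (R : realType) (d : nat -> nat) (x : 'cV[R]_(d 0%N)).

Lemma relu_ge0 m k (M : 'M[R]_(m, k)) i j : 0 <= relu M i j.
Proof. by rewrite mxE le_max lexx orbT. Qed.

Lemma Zpm_ge0 (W : Params R d) (b : Biases R d) k :
  (forall i j, 0 <= (Zpm x W b k).1 i j) /\ (forall i j, 0 <= (Zpm x W b k).2 i j).
Proof.
elim: k => [|k [IHp IHm]] /=; first by split=> i j; rewrite ?relu_ge0 ?mxE.
have Zm_ge0 i j : 0 <= (relu (W k.+2) *m (Zpm x W b k).2
                        + relu (- W k.+2) *m (Zpm x W b k).1) i j.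
  by rewrite !mxE addr_ge0 // sumr_ge0 // => h _; rewrite mulr_ge0 ?relu_ge0.
by split=> i j //; rewrite mxE le_max Zm_ge0 orbT.
Qed.

Lemma Zpm_ext (W W' : Params R d) (b b' : Biases R d) k :
  (forall j, (1 <= j <= k.+1)%N -> W j = W' j /\ b j = b' j) ->
  Zpm x W b k = Zpm x W' b' k.
Proof.
elim: k => [|k IH] eqWb /=; first by have [-> ->] := eqWb 1%N isT.
rewrite IH => [|j /andP[j1 jk]]; last by apply: eqWb; rewrite j1 ltnW.
by have [-> ->] := eqWb k.+2 (leqnn _).
Qed.

End Activations.

Section BlockMixture.
Variables (R : realType) (d : nat -> nat) (x : 'cV[R]_(d 0%N)) (n l : nat).
Variables (W1 W2 : Params R d) (b1 b2 : Biases R d) (t : R).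
Hypothesis off_block : forall k, (1 <= k <= n.+2)%N -> k != l ->
  W1 k = W2 k /\ b1 k = b2 k.
Hypothesis t01 : 0 <= t <= 1.

Definition Wt : Params R d := fun k => t *: W1 k + (1 - t) *: W2 k.
Definition bt : Biases R d := fun k => t *: b1 k + (1 - t) *: b2 k.

Let mix_same m k (A : 'M[R]_(m, k)) : t *: A + (1 - t) *: A = A.
Proof. by rewrite -scalerDl addrC subrK scale1r. Qed.

Lemma mix_off_block j : (1 <= j <= n.+2)%N -> j != l ->
  (W1 j = Wt j /\ b1 j = bt j) /\ (W2 j = Wt j /\ b2 j = bt j).
Proof.
move=> j_range jl; rewrite /Wt /bt /=.
by have [-> ->] := off_block j_range jl; rewrite !mix_same.
Qed.

Lemma Zpm_or_weights_fixed k : (k <= n)%N ->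
  (Zpm x W1 b1 k = Zpm x Wt bt k /\ Zpm x W2 b2 k = Zpm x Wt bt k) \/
  (W1 k.+2 = Wt k.+2 /\ W2 k.+2 = Wt k.+2).
Proof.
move=> kn; have [kl | kl] := eqVneq k.+2 l; [left | right].
- have below_l j : (1 <= j <= k.+1)%N -> (1 <= j <= n.+2)%N /\ j != l.
    move=> /andP[j1 jk]; rewrite j1 -kl neq_ltn ltnS jk /=.
    by split=> //; apply: leq_trans jk (leqW kn : (k.+1 <= n.+2)%N).
  split; apply: Zpm_ext => j /below_l[j_range jl];
    by case: (mix_off_block j_range jl).
- by have [[-> _] [-> _]] := mix_off_block (kn : (1 <= k.+2 <= n.+2)%N) kl.
Qed.

Definition Zpm_le_mix k :=
  le_mix t (Zpm x Wt bt k).1 (Zpm x W1 b1 k).1 (Zpm x W2 b2 k).1 /\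
  le_mix t (Zpm x Wt bt k).2 (Zpm x W1 b1 k).2 (Zpm x W2 b2 k).2.

Lemma le_mix_weighted_Zpm k (P : 'M[R]_(d k.+2, d k.+1) -> 'M[R]_(d k.+2, d k.+1)) :
  (k <= n)%N -> Zpm_le_mix k ->
  (forall M i j, 0 <= P M i j) -> le_mix t (P (Wt k.+2)) (P (W1 k.+2)) (P (W2 k.+2)) ->
  le_mix t (P (Wt k.+2) *m (Zpm x Wt bt k).1)
    (P (W1 k.+2) *m (Zpm x W1 b1 k).1) (P (W2 k.+2) *m (Zpm x W2 b2 k).1) /\
  le_mix t (P (Wt k.+2) *m (Zpm x Wt bt k).2)
    (P (W1 k.+2) *m (Zpm x W1 b1 k).2) (P (W2 k.+2) *m (Zpm x W2 b2 k).2).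
Proof.
move=> kn [hZp hZm] P_ge0 hP; have [Zp_ge0 Zm_ge0] := Zpm_ge0 x Wt bt k.
by split; apply: le_mix_mulmx => //;
  case: (Zpm_or_weights_fixed kn) => [[-> ->] | [-> ->]]; by [right | left].
Qed.

Lemma le_mix_Zpm k : (k <= n)%N -> Zpm_le_mix k.
Proof.
elim: k => [|k IH] kn /=.
  split; last by move=> i j; rewrite !mxE; lra.
  apply: le_mix_relu => //; rewrite /Wt /bt mulmxDl -!scalemxAl addrACA -!scalerDr.
  exact: le_mix_conv.
have kn' := ltnW kn; have hZ := IH kn'.
have [hWp hWm] := le_mix_relu_conv t01 (W1 k.+2) (W2 k.+2).
have [hpp hpm] := le_mix_weighted_Zpm kn' hZ (@relu_ge0 R _ _) hWp.
have [hmp hmm] := le_mix_weighted_Zpm kn' hZ (fun M => @relu_ge0 R _ _ (- M)) hWm.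
have hZm := le_mix_add hpm hmp.
split=> //; apply: le_mix_vmax => //; apply: le_mix_add; last exact: le_mix_conv.
exact: le_mix_add.
Qed.

Lemma le_mix_net :
  le_mix t (netA x Wt bt n) (netA x W1 b1 n) (netA x W2 b2 n) /\
  le_mix t (netB x Wt bt n) (netB x W1 b1 n) (netB x W2 b2 n).
Proof.
have hZ := le_mix_Zpm (leqnn n).
have [hWp hWm] := le_mix_relu_conv t01 (W1 n.+2) (W2 n.+2).
have [hpp hpm] := le_mix_weighted_Zpm (leqnn n) hZ (@relu_ge0 R _ _) hWp.
have [hmp hmm] := le_mix_weighted_Zpm (leqnn n) hZ (fun M => @relu_ge0 R _ _ (- M)) hWm.
have [hbp hbm] := le_mix_relu_conv t01 (b1 n.+2) (b2 n.+2).
by split; apply: le_mix_add => //; apply: le_mix_add.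
Qed.

Variable y : 'I_(d n.+2).

Lemma hDC_le_mix : hDC x y Wt bt <= t * hDC x y W1 b1 + (1 - t) * hDC x y W2 b2.
Proof.
have [hA hB] := le_mix_net; rewrite /hDC.
by have := hA y 0; have := sum_le_mix xpredT hB; lra.
Qed.

Hypothesis C_gt0 : (0 < d n.+2)%N.

Definition netF_shifted (W : Params R d) (b : Biases R d) : 'cV[R]_(d n.+2) :=
  netF x W b n + const_mx (\sum_(c < d n.+2) netB x W b n c 0).

Lemma gDC_LSE W b : gDC x y W b = LSE (netF_shifted W b) + netB x W b n y 0.
Proof. by rewrite /gDC /netF_shifted LSE_addc. Qed.

Lemma netF_shiftedE W b c j : netF_shifted W b c j =
  netA x W b n c 0 + \sum_(c' | c' != c) netB x W b n c' 0.
Proof.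
rewrite /netF_shifted /netF; move: (netA x W b n) (netB x W b n) => A B.
by rewrite ord1 !mxE (bigD1 c) //=; ring.
Qed.

Lemma gDC_le_mix : gDC x y Wt bt <= t * gDC x y W1 b1 + (1 - t) * gDC x y W2 b2.
Proof.
have [hA hB] := le_mix_net.
have hF : le_mix t (netF_shifted Wt bt) (netF_shifted W1 b1) (netF_shifted W2 b2).
  move=> c j; rewrite !netF_shiftedE.
  by have := hA c 0; have := sum_le_mix (fun c' => c' != c) hB; lra.
by rewrite !gDC_LSE; have := le_mix_LSE C_gt0 t01 hF; have := hB y 0; lra.
Qed.

End BlockMixture.

Theorem corollary3p5 (R : realType) (d : nat -> nat) (n : nat)
  (HC : (0 < d n.+2)%N) (x : 'cV[R]_(d 0%N)) (y : 'I_(d n.+2)) :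
  (forall (W : Params R d) (b : Biases R d),
     LCE x y W b = gDC x y W b - hDC x y W b) /\
  (forall l : nat, (1 <= l <= n.+2)%N ->
     block_convex n.+2 l (gDC x y) /\ block_convex n.+2 l (hDC x y)).
Proof.
split=> [W b | l _]; first by rewrite /LCE /gDC /hDC; ring.
split=> W1 W2 b1 b2 t off_block t01.
- exact: (gDC_le_mix x off_block t01 y HC).
- exact: (hDC_le_mix x off_block t01 y).
Qed.
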